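(* Let $\Omega$ be a finite nonempty set, $\mathcal{A}=2^\Omega$, and let $\mu$ be a $q$-measure on $\mathcal{A}$. If $\phi$ and $\psi$ are quadratic coevents on $\mathcal{A}$ that are both 2-generated by $\mu$, then $\phi=\psi$.
   Context: Let $\Omega$ be a finite nonempty set and $\mathcal{A}=2^\Omega$. A coevent is a map $\phi:\mathcal{A}\to\{0,1\}$ with $\phi(\emptyset)=0$. A coevent $\phi$ is quadratic if for all pairwise disjoint $A,B,C\in\mathcal{A}$: $\phi(A\cup B\cup C)=\phi(A\cup B)\oplus\phi(A\cup C)\oplus\phi(B\cup C)\oplus\phi(A)\oplus\phi(B)\oplus\phi(C)$, where $\oplus$ is addition mod 2. For $f:\Omega\to[0,\infty)$ and a coevent $\phi$, the $q$-integral is $\int f\,d\phi=\int_0^\infty \phi(\{\omega\in\Omega: f(\omega)>\lambda\})\,d\lambda$ (Lebesgue measure in $\lambda$), and for $A\in\mathcal{A}$, $\int_A f\,d\phi=\int f\chi_A\,d\phi$. A $q$-measure is a map $\mu:\mathcal{A}\to[0,\infty)$ such that for all pairwise disjoint $A,B,C\in\mathcal{A}$: $\mu(A\cup B\cup C)=\mu(A\cup B)+\mu(A\cup C)+\mu(B\cup C)-\mu(A)-\mu(B)-\mu(C)$. The $q$-measure $\mu$ 2-generates $\phi$ if there is a symmetric function $f:\Omega\times\Omega\to(0,\infty)$ (i.e. $f(\omega,\omega')=f(\omega',\omega)$) such that for all $A\in\mathcal{A}$, $\mu(A)=\int_A g_A\,d\phi$, where $g_A:\Omega\to[0,\infty)$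 is defined by $g_A(\omega')=\int_A f(\cdot,\omega')\,d\phi$ (the $q$-integral over $A$ of $\omega\mapsto f(\omega,\omega')$). *)

(* Scalars: an arbitrary real field R (the paper uses the
   real numbers; all notions involved are finite/algebraic). *)
From HB Require Import structures.
From mathcomp Require Import all_boot all_order all_algebra.
Set Implicit Arguments. Unset Strict Implicit. Unset Printing Implicit Defensive.
Import Order.TTheory GRing.Theory Num.Theory.
Local Open Scope ring_scope.

Section QDefs.
Variables (R : realFieldType) (T : finType).

Definition coevent (phi : {set T} -> bool) : Prop := phi set0 = false.

Definition quadratic (phi : {set T} -> bool) : Prop :=
  forall A B C : {set T},
    [disjoint A & B] -> [disjoint A & C] -> [disjoint B & C] ->
    phi (A :|: B :|: C) =
      phi (A :|: B) (+) phi (A :|: C) (+) phi (B :|: C)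
        (+) phi A (+) phi B (+) phi C.

Definition qmeasure (mu : {set T} -> R) : Prop :=
  (forall A, 0 <= mu A) /\
  forall A B C : {set T},
    [disjoint A & B] -> [disjoint A & C] -> [disjoint B & C] ->
    mu (A :|: B :|: C) =
      mu (A :|: B) + mu (A :|: C) + mu (B :|: C) - mu A - mu B - mu C.

(* q-integral  int_0^oo phi({f > lambda}) dlambda  for f : T -> [0,oo).
   Since T is finite, lambda |-> phi({f > lambda}) is a step function:
   for each positive value v of f, on the interval [v', v) where v' is the
   previous value of f (or 0), {f > lambda} = {f >= v}; beyond max f the set
   is empty and phi(empty) = 0. The Lebesgue integral is therefore the
   following finite sum. *)
Definition qint (phi : {set T} -> bool) (f : T -> R) : R :=
  \sum_(v <- undup [seq f x | x <- enum T] | 0 < v)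
     (v - \big[Num.max/0]_(x | f x < v) f x) * (phi [set x | v <= f x])%:R.

Definition qint_on (phi : {set T} -> bool) (A : {set T}) (f : T -> R) : R :=
  qint phi (fun x => if x \in A then f x else 0).

Definition two_generates (mu : {set T} -> R) (phi : {set T} -> bool) : Prop :=
  exists f : T -> T -> R,
    (forall x y, 0 < f x y) /\ (forall x y, f x y = f y x) /\
    forall A : {set T},
      mu A = qint_on phi A (fun w' => qint_on phi A (fun w => f w w')).

End QDefs.

From HB Require Import structures.
From mathcomp Require Import all_boot all_order all_algebra.
From mathcomp Require Import lra.
From Stdlib Require Import FunctionalExtensionality.
Set Implicit Arguments.
Unset Strict Implicit.
Unset Printing Implicit Defensive.
Import Order.TTheory GRing.Theory Num.Theory.
Local Open Scope ring_scope.

(* A quadratic coevent is determined by its values on sets of at most two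
   points: a set A with three or more elements splits as {a} + {b} + C, and the
   quadratic identity expresses phi A through six proper subsets of A.  On
   such small sets a 2-generating kernel f > 0 makes mu explicit, because the
   q-integral of a function supported on at most two points is piecewise
   linear in its values: mu {a} = f(a,a) phi {a} determines phi {a}, and
   mu {a,b}, computed from f(a,a), f(a,b), f(b,b), has a shape that reveals
   phi {a,b} once phi {a}, phi {b}, mu {a} and mu {b} are known. *)

Section QuadraticCoevent.
Variable T : finType.
Implicit Types (phi psi : {set T} -> bool) (A X : {set T}).

Lemma quadratic_set0 phi : quadratic phi -> phi set0 = false.
Proof.
move=> qphi; have d0 : [disjoint set0 & set0 :> {set T}] by rewrite -setI_eq0 setI0.
by have := qphi _ _ _ d0 d0 d0; rewrite !setU0; case: (phi set0).
Qed.

Lemma quadratic_eq_proper phi psi A : quadratic phi -> quadratic psi ->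
  (2 < #|A|)%N -> (forall X, X \proper A -> phi X = psi X) -> phi A = psi A.
Proof.
move=> qphi qpsi lt2A eq_proper.
have eq_missing X w : w \in A -> X \subset A -> w \notin X -> phi X = psi X.
  move=> wA XA wX; apply/eq_proper/(sub_proper_trans _ (properD1 wA)).
  by rewrite subsetD1 XA.
have [a aA] : exists a, a \in A by apply/card_gt0P; apply: ltn_trans lt2A.
have [b bA] : exists b, b \in A :\ a.
  by apply/card_gt0P; move: lt2A; rewrite (cardsD1 a) aA add1n ltnS => /ltnW.
have [c cA] : exists c, c \in A :\ a :\ b.
  by apply/card_gt0P; move: lt2A; rewrite (cardsD1 a) aA (cardsD1 b (A :\ a)) bA.
set C := A :\ a :\ b in cA *.
move: bA cA; rewrite !inE => /andP[ba bA] /and3P[cb ca cA].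
have defA : A = [set a] :|: [set b] :|: C.
  apply/setP => x; rewrite !inE.
  case: (eqVneq x a) => [->|_]; first by rewrite aA.
  by case: (eqVneq x b) => [->|_]; rewrite ?bA.
have dab : [disjoint [set a] & [set b]] by rewrite disjoints1 inE eq_sym.
have daC : [disjoint [set a] & C] by rewrite disjoints1 !inE eqxx andbF.
have dbC : [disjoint [set b] & C] by rewrite disjoints1 !inE eqxx.
have CA : C \subset A by apply: subset_trans (subD1set _ _) (subD1set _ _).
rewrite defA (qphi _ _ _ dab daC dbC) (qpsi _ _ _ dab daC dbC).
rewrite (eq_missing _ c) ?(eq_missing ([set a] :|: C) b)
  ?(eq_missing ([set b] :|: C) a) ?(eq_missing [set a] b)
  ?(eq_missing [set b] a) ?(eq_missing C a) //.
all: by rewrite ?subUset ?sub1set ?aA ?bA ?CA //= /C !inE ?eqxx ?(eq_sym a)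
  ?(negbTE ba) ?(negbTE ca) ?(negbTE cb) ?andbF.
Qed.

Lemma quadratic_eq phi psi : quadratic phi -> quadratic psi ->
  (forall a, phi [set a] = psi [set a]) ->
  (forall a b, a != b -> phi [set a; b] = psi [set a; b]) ->
  phi = psi.
Proof.
move=> qphi qpsi eq1 eq2; apply: functional_extensionality => A.
elim: {A}_.+1 {-2}A (ltnSn #|A|) => // n IHn A; rewrite ltnS => leAn.
have [leA2 | lt2A] := leqP #|A| 2.
  move: leA2; rewrite leq_eqVlt ltnS leq_eqVlt ltnS leqn0.
  case/or3P => [/cards2P[a [b [ab ->]]] | /cards1P[a ->] | /eqP/cards0_eq ->].
  - exact: eq2.
  - exact: eq1.
  - by rewrite !quadratic_set0.
apply: quadratic_eq_proper => // X /proper_card ltXA.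
by apply: IHn; apply: leq_trans leAn.
Qed.
End QuadraticCoevent.

Section QIntegral.
Variables (R : realFieldType) (T : finType).
Implicit Types (phi : {set T} -> bool) (g : T -> R) (A B : {set T}).

Definition max_below g (v : R) : R := \big[Num.max/0]_(x | g x < v) g x.

Lemma max_below_eq g v j : g j < v -> 0 <= g j ->
  (forall x, g x < v -> g x <= g j) -> max_below g v = g j.
Proof.
move=> ltjv gj0 lejx; apply: le_anti; rewrite bigmax_le //=.
exact: (bigmax_sup j).
Qed.

Lemma max_below_eq0 g v : (forall x, g x < v -> g x <= 0) -> max_below g v = 0.
Proof. by move=> le0; rewrite /max_below bigmax_eq_id. Qed.

Lemma qint_seqE phi g (s : seq R) : (forall x, 0 <= g x) -> uniq s ->
  (forall v, v \in s -> 0 <= v) ->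
  (forall v, 0 < v -> (v \in s) = [exists x, g x == v]) ->
  qint phi g = \sum_(v <- s) (v - max_below g v) * (phi [set x | v <= g x])%:R.
Proof.
move=> g_ge0 uniq_s s_ge0 mem_s.
rewrite [RHS](bigID (fun v => 0 < v)) /= [X in _ + X]big1_seq ?addr0; last first.
  move=> v /andP[/negbTE v_le0 /s_ge0 v_ge0].
  have -> : v = 0 by apply/eqP; rewrite eq_le v_ge0 leNgt v_le0.
  by rewrite max_below_eq0 ?subrr ?mul0r // => x; rewrite ltNge g_ge0.
rewrite /qint -[LHS]big_filter -[RHS]big_filter; apply: perm_big.
apply: uniq_perm; rewrite ?filter_uniq ?undup_uniq // => v.
rewrite !mem_filter mem_undup; case: ltP => //= v_gt0; rewrite mem_s //.
by apply/mapP/existsP => [[x _ ->]|[x /eqP <-]]; exists x; rewrite ?mem_enum.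
Qed.

Lemma bottom_level_term phi g A (x : R) : 0 <= x ->
  (forall z, g z < x -> g z <= 0) -> (forall z, 0 < x -> (x <= g z) = (z \in A)) ->
  (x - max_below g x) * (phi [set z | x <= g z])%:R = x * (phi A)%:R.
Proof.
move=> x_ge0 below_x level_x; rewrite max_below_eq0 // subr0.
move: x_ge0; rewrite le_eqVlt => /predU1P[<-|x_gt0]; first by rewrite !mul0r.
by congr (_ * (phi _)%:R); apply/setP => z; rewrite inE level_x.
Qed.

Lemma qint_const_on phi g A a (x : R) : a \in A -> 0 <= x ->
  (forall z, g z = if z \in A then x else 0) -> qint phi g = x * (phi A)%:R.
Proof.
move=> aA x_ge0 gE.
have g_ge0 z : 0 <= g z by rewrite gE; case: ifP.
rewrite (@qint_seqE _ _ [:: x]) ?big_seq1 //; first last.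
- move=> v v_gt0; rewrite inE; apply/eqP/existsP => [->|[z /eqP]].
    by exists a; rewrite gE aA.
  by rewrite gE; case: ifP => // _ v0; rewrite -v0 ltxx in v_gt0.
- by move=> v; rewrite inE => /eqP ->.
apply: bottom_level_term => // z; rewrite gE; case: ifP => _ //;
  by [rewrite ltxx | move=> x_gt0; rewrite lexx | move=> x_gt0; rewrite leNgt x_gt0].
Qed.

Lemma qint_two_levels phi g A B a b (x y : R) : a \in A :\: B -> b \in B ->
  B \subset A -> 0 <= x -> x < y ->
  (forall z, g z = if z \in B then y else if z \in A then x else 0) ->
  qint phi g = x * (phi A)%:R + (y - x) * (phi B)%:R.
Proof.
move=> /setDP[aA aNB] bB BA x_ge0 lt_xy gE.
have y_gt0 : 0 < y by apply: le_lt_trans lt_xy.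
have g_ge0 z : 0 <= g z.
  by rewrite gE; case: ifP => _; [|case: ifP]; rewrite ?(ltW y_gt0).
have ga : g a = x by rewrite gE (negbTE aNB) aA.
rewrite (@qint_seqE _ _ [:: x; y]) ?big_cons ?big_nil ?addr0 //; first last.
- move=> v v_gt0; rewrite !inE; apply/orP/existsP => [[]/eqP->|[z /eqP]].
  + by exists a; rewrite ga.
  + by exists b; rewrite gE bB.
  rewrite gE; case: ifP => _; first by move->; right.
  by case: ifP => _ v0; [left; rewrite v0 | rewrite -v0 ltxx in v_gt0].
- by move=> v; rewrite !inE => /orP[]/eqP->; last exact: ltW.
- by rewrite /= inE lt_eqF.
congr (_ + _).
  apply: bottom_level_term => // z; rewrite gE.
    by case: ifP => _; [rewrite ltNge (ltW lt_xy) | case: ifP => _; rewrite ?ltxx].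
  case: ifP => [zB _|_ x_gt0]; first by rewrite (ltW lt_xy) (subsetP BA).
  by case: ifP => _; rewrite ?lexx // leNgt x_gt0.
rewrite (@max_below_eq _ _ a) ga //; last first.
  move=> z; rewrite gE; case: ifP => _; first by rewrite ltxx.
  by case: ifP => _ // _; apply: ltW.
congr (_ * (phi _)%:R); apply/setP => z; rewrite inE gE.
case: ifP => _; first by rewrite lexx.
by case: ifP => _; rewrite leNgt ?lt_xy ?y_gt0.
Qed.

Definition pair_qint (r p q x y : R) : R :=
  if x <= y then x * r + (y - x) * q else y * r + (x - y) * p.

Lemma qint_pair phi g a b (x y : R) : a != b -> 0 <= x -> 0 <= y ->
  (forall z, g z = if z == a then x else if z == b then y else 0) ->
  qint phi g = pair_qint (phi [set a; b])%:R (phi [set a])%:R (phi [set b])%:R x y.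
Proof.
wlog le_xy : a b x y / x <= y => [wlog_le ab x_ge0 y_ge0 gE|ab x_ge0 y_ge0 gE].
  have [le_xy|lt_yx] := leP x y; first exact: wlog_le.
  rewrite setUC (wlog_le b a y x) 1?eq_sym ?(ltW lt_yx) // => [|z].
    by rewrite /pair_qint ltW // leNgt lt_yx.
  by rewrite gE; case: eqVneq => // ->; rewrite (negbTE ab).
rewrite /pair_qint le_xy; move: le_xy; rewrite le_eqVlt => /predU1P[eq_xy|lt_xy].
  subst y; rewrite subrr mul0r addr0; apply: (@qint_const_on _ _ _ a) => // [|z].
    by rewrite !inE eqxx.
  by rewrite gE !inE; case: eqVneq; case: eqVneq.
apply: (@qint_two_levels _ _ _ _ a b) => // [|||z].
- by rewrite !inE eqxx (negbTE ab).
- by rewrite inE.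
- by rewrite sub1set !inE eqxx orbT.
by rewrite gE !inE; case: eqVneq => [->|_]; rewrite ?(negbTE ab) //; case: eqVneq.
Qed.

(* With phi {a,b} = 1 the two-point q-integral is a max, a projection or a min
   of its arguments, with phi {a,b} = 0 a truncated difference of them or 0;
   these tests tell the two cases apart. *)
Definition decode_pair (p q : bool) (m ma mb : R) : bool :=
  if p then (if q then (ma <= m) && (mb <= m) else m == ma)
  else (if q then m == mb else m != 0).

Lemma decode_pair_qint (p q r : bool) (u v w : R) : 0 < u -> 0 < v -> 0 < w ->
  let F := pair_qint r%:R p%:R q%:R in
  r = decode_pair p q (F (F u w) (F w v)) (u * p%:R) (v * q%:R).
Proof.
move=> u_gt0 v_gt0 w_gt0 /=; rewrite /decode_pair /pair_qint.
case: (leP u w) => ?; case: (leP w v) => ?.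
all: case: p; case: q; case: r;
  rewrite /= ?mulr1n ?mulr0n ?mulr1 ?mulr0 ?addr0 ?add0r.
all: case: ifPn => ?; by [apply/esym; lra | apply/esym/negbTE; lra].
Qed.
End QIntegral.

Section TwoGenerated.
Variables (R : realFieldType) (T : finType).
Variables (mu : {set T} -> R) (phi : {set T} -> bool) (f : T -> T -> R).
Hypothesis f_gt0 : forall x y, 0 < f x y.
Hypothesis mu_gen : forall A,
  mu A = qint_on phi A (fun w' => qint_on phi A (fun w => f w w')).

Lemma mu_set1 a : mu [set a] = f a a * (phi [set a])%:R.
Proof.
have faa_ge0 := ltW (f_gt0 a a).
rewrite mu_gen /qint_on.
rewrite (@qint_const_on _ _ _ _ [set a] a (f a a * (phi [set a])%:R)).
- by case: (phi _); rewrite ?mulr1 ?mulr0.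
- by rewrite inE.
- by rewrite mulr_ge0 ?ler0n.
move=> z; rewrite inE; case: eqP => // ->.
apply: (@qint_const_on _ _ _ _ [set a] a); rewrite ?inE // => y.
by rewrite inE; case: eqP => // ->.
Qed.

Hypothesis f_sym : forall x y, f x y = f y x.

Lemma mu_set2 a b : a != b ->
  let F := pair_qint (phi [set a; b])%:R (phi [set a])%:R (phi [set b])%:R in
  mu [set a; b] = F (F (f a a) (f a b)) (F (f a b) (f b b)).
Proof.
move=> ab F.
have F_ge0 x y : 0 <= x -> 0 <= y -> 0 <= F x y.
  move=> x_ge0 y_ge0; rewrite /F /pair_qint.
  by case: (leP x y) => ? /=; rewrite addr_ge0 ?mulr_ge0 ?subr_ge0 ?ler0n // ltW.
have f_ge0 x y : 0 <= f x y by apply: ltW.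
rewrite mu_gen /qint_on; apply: qint_pair => // [||z]; try exact: F_ge0.
rewrite !inE; case: (eqVneq z a) => [->|_] /=.
  apply: qint_pair => // y; rewrite !inE.
  by case: eqVneq => [->|_] //=; case: eqVneq => [->|] //; rewrite f_sym.
case: (eqVneq z b) => [->|//] /=; apply: qint_pair => // y; rewrite !inE.
by case: eqVneq => [->|_] //=; case: eqVneq => [->|].
Qed.
End TwoGenerated.

Lemma two_generates_set1 (R : realFieldType) (T : finType) (mu : {set T} -> R)
  (phi : {set T} -> bool) : two_generates mu phi ->
  forall a, phi [set a] = (mu [set a] != 0).
Proof.
case=> f [f_gt0 [f_sym mu_gen]] a; rewrite (mu_set1 f_gt0 mu_gen).
by case: (phi _); rewrite ?mulr1 ?mulr0 ?eqxx ?gt_eqF.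
Qed.

Lemma two_generates_set2 (R : realFieldType) (T : finType) (mu : {set T} -> R)
  (phi : {set T} -> bool) : two_generates mu phi ->
  forall a b, a != b -> phi [set a; b] = decode_pair (phi [set a]) (phi [set b])
    (mu [set a; b]) (mu [set a]) (mu [set b]).
Proof.
case=> f [f_gt0 [f_sym mu_gen]] a b ab.
rewrite (mu_set2 f_gt0 mu_gen f_sym ab) !(mu_set1 f_gt0 mu_gen).
exact: decode_pair_qint.
Qed.

Theorem theorem5p3 (R : realFieldType) (T : finType) (HT : (0 < #|T|)%N)
  (mu : {set T} -> R) (phi psi : {set T} -> bool) :
  qmeasure mu ->
  coevent phi -> quadratic phi ->
  coevent psi -> quadratic psi ->
  two_generates mu phi -> two_generates mu psi ->
  phi = psi.
Proof.
move=> _ _ qphi _ qpsi gen_phi gen_psi.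
have eq1 a : phi [set a] = psi [set a].
  by rewrite (two_generates_set1 gen_phi) (two_generates_set1 gen_psi).
apply: (quadratic_eq qphi qpsi eq1) => a b ab.
by rewrite (two_generates_set2 gen_phi ab) (two_generates_set2 gen_psi ab) !eq1.
Qed.
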